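(* Let $(\mathbf A,\perp,\{\mathsf{t},\mathsf{f}\})$ be an $\mathfrak{N}_w^1$-model with $|A|>1$. Then the Dedekind–MacNeille completion $\mathbb{DM}(\mathcal{I}(\mathbf A))=(\mathrm{DM}(\mathcal{I}(\mathbf A)),\land,\lor,{}^{*},\emptyset,A)$ of the poset with antitone involution $\mathcal{I}(\mathbf A)=(A,\precsim,{}^{*})$ is not an orthomodular lattice.
   Context: A weak $\mathcal{N}$-algebra is an algebra $(A,\otimes,\circ,{}^{*})$ of type $(2,2,1)$ with $\otimes,\circ$ commutative, $x^{**}=x$, and $(x\otimes y)\circ z=(x\otimes z)\circ y$. Term operations: $x\Rightarrow y:=(x\circ y^{*})^{*}$, $x\Leftrightarrow y:=(x\Rightarrow y)\otimes(y\Rightarrow x)$, $x\not\Leftrightarrow y:=(x\Leftrightarrow y)^{*}$, $x\not\Leftrightarrow y\not\Leftrightarrow z:=((x\not\Leftrightarrow y)\otimes(x\not\Leftrightarrow z))\otimes(y\not\Leftrightarrow z)$, $x\oplus y:=(x^{*}\otimes y^{*})^{*}$. With $\mathsf{t}\ne\mathsf{f}$ symbols not in $A$, $\overline A=A\cup\{\mathsf{t},\mathsf{f}\}$, an $\mathfrak{N}_w$-model is $(\mathbf A,\perp,\{\mathsf{t},\mathsf{f}\})$, $\mathbf A$ a weak $\mathcal{N}$-algebra, $\perp\subseteq\overline A\times\overline A$, such that for all $x,y,z\in A$: (a) $x\perp x^{*}$; (b) $x\perp y^{*}$ and $y\perp x^{*}$ imply $x=y$; (c) $x\perp y$ iff $x\circ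 y\perp\mathsf{t}$; (d) $x\perp\mathsf{t}$ iff $x^{*}\perp\mathsf{f}$; (e) $x\perp\mathsf{f}$ and $y\perp\mathsf{f}$ iff $x\otimes y\perp\mathsf{f}$; (f) $(x\circ y^{*})^{*}\perp(x\circ y)^{*}$; (g) $x\perp y$ and $x\perp\mathsf{f}$ imply $y\perp\mathsf{t}$; (h) $(x\not\Leftrightarrow y\not\Leftrightarrow z)\perp((x\Rightarrow y)\Rightarrow((y\Rightarrow z)\Rightarrow(x\Rightarrow z)))^{*}$. An $\mathfrak{N}_w^1$-model is an $\mathfrak{N}_w$-model such that for all $x,y,z\in A$: $x\perp\mathsf{f}$ implies $x\oplus y\perp\mathsf{f}$; and $x\perp y^{*}$, $y\perp z^{*}$ imply $x\perp z^{*}$. On $A$, $x\precsim y$ iff $x\perp y^{*}$; $(A,\precsim,{}^{*})$ is a poset with antitone involution. For $X\subseteq A$: $L(X)=\{y: y\precsim x\ \forall x\in X\}$, $U(X)=\{y: x\precsim y\ \forall x\in X\}$, $X'=\{x^{*}:x\in X\}$. $\mathrm{DM}(\mathcal{I}(\mathbf A))=\{X\subseteq A: L(U(X))=X\}$, ordered by inclusion, with $X\land Y=X\cap Y$, $X\lor Y=L(U(X\cup Y))$, $X^{*}=L(X')$, bottom $\emptyset$ and top $A$. An ortholattice $(B,\land,\lor,{}^{*},0,1)$ is orthomodular if $x\le y$ and $x^{*}\land y=0$ imply $x=y$. *)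

Set Implicit Arguments.

Section Defs.
Variable A : Type.
Variables (otimes circ : A -> A -> A) (star : A -> A).

Definition weak_N_algebra : Prop :=
  (forall x y, otimes x y = otimes y x) /\
  (forall x y, circ x y = circ y x) /\
  (forall x, star (star x) = x) /\
  (forall x y z, circ (otimes x y) z = circ (otimes x z) y).

Definition imp (x y : A) : A := star (circ x (star y)).
Definition biimp (x y : A) : A := otimes (imp x y) (imp y x).
Definition nbiimp (x y : A) : A := star (biimp x y).
Definition nbiimp3 (x y z : A) : A :=
  otimes (otimes (nbiimp x y) (nbiimp x z)) (nbiimp y z).
Definition oplus (x y : A) : A := star (otimes (star x) (star y)).

End Defs.

Inductive ext (A : Type) : Type :=
  | El : A -> ext A
  | Tt : ext A
  | Ff : ext A.
Arguments Tt {A}.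
Arguments Ff {A}.

Section Models.
Variable A : Type.
Variables (otimes circ : A -> A -> A) (star : A -> A).
Variable perp : ext A -> ext A -> Prop.

Definition Nw_model : Prop :=
  weak_N_algebra otimes circ star /\
  (* (a) *) (forall x, perp (El x) (El (star x))) /\
  (* (b) *) (forall x y, perp (El x) (El (star y)) -> perp (El y) (El (star x)) -> x = y) /\
  (* (c) *) (forall x y, perp (El x) (El y) <-> perp (El (circ x y)) Tt) /\
  (* (d) *) (forall x, perp (El x) Tt <-> perp (El (star x)) Ff) /\
  (* (e) *) (forall x y, (perp (El x) Ff /\ perp (El y) Ff) <-> perp (El (otimes x y)) Ff) /\
  (* (f) *) (forall x y, perp (El (star (circ x (star y)))) (El (star (circ x y)))) /\
  (* (g) *) (forall x y, perp (El x) (El y) -> perp (El x) Ff -> perp (El y) Tt) /\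
  (* (h) *) (forall x y z,
               perp (El (nbiimp3 otimes circ star x y z))
                    (El (star (imp circ star (imp circ star x y)
                                 (imp circ star (imp circ star y z) (imp circ star x z)))))).

Definition Nw1_model : Prop :=
  Nw_model /\
  (forall x y, perp (El x) Ff -> perp (El (oplus otimes star x y)) Ff) /\
  (forall x y z, perp (El x) (El (star y)) -> perp (El y) (El (star z)) ->
                 perp (El x) (El (star z))).

Definition prec (x y : A) : Prop := perp (El x) (El (star y)).

Definition lower (X : A -> Prop) : A -> Prop := fun y => forall x, X x -> prec y x.
Definition upper (X : A -> Prop) : A -> Prop := fun y => forall x, X x -> prec x y.
Definition sprime (X : A -> Prop) : A -> Prop := fun y => exists x, X x /\ y = star x.
Definition seteq (X Y : A -> Prop) : Prop := forall x, X x <-> Y x.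
Definition subset (X Y : A -> Prop) : Prop := forall x, X x -> Y x.

Definition inDM (X : A -> Prop) : Prop := seteq (lower (upper X)) X.

Definition DMmeet (X Y : A -> Prop) : A -> Prop := fun x => X x /\ Y x.
Definition DMjoin (X Y : A -> Prop) : A -> Prop := lower (upper (fun x => X x \/ Y x)).
Definition DMstar (X : A -> Prop) : A -> Prop := lower (sprime X).
Definition DMbot : A -> Prop := fun _ => False.
Definition DMtop : A -> Prop := fun _ => True.

Definition DM_orthomodular : Prop :=
  forall X Y, inDM X -> inDM Y -> subset X Y ->
    seteq (DMmeet (DMstar X) Y) DMbot -> seteq X Y.

End Models.

(* In a nontrivial N_w^1-model no element is orthogonal to both t and f: by
   (e), (g) and the oplus-axiom everything would then be orthogonal to t, and
   (b), (c) collapse the model.  Axioms (f), (g) turn a self-orthogonal q into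
   such an element (namely q ∘ q), so ⊥ is irreflexive.  Together with the
   exchange law (x ⊗ y) ⊥ z ⟹ (x ⊗ z) ⊥ y and monotonicity of ⊗, this shows
   that for a ≾ b the principal ideals ↓b and ↓a* are disjoint, i.e.
   (↓a)* ∧ ↓b = ∅ in the completion.  Orthomodularity would then give
   ↓a = ↓b, hence a = b, for every comparable pair; but t-elements lie
   strictly below suitable f-elements. *)

Set Implicit Arguments.

Section NonOrthomodularity.

Variables (A : Type) (otimes circ : A -> A -> A) (star : A -> A).
Variable perp : ext A -> ext A -> Prop.

Local Notation "x ⊗ y" := (otimes x y) (at level 40, left associativity).
Local Notation "x ⊥ y" := (perp (El x) (El y)) (at level 70).
Local Notation "x ≾ y" := (perp (El x) (El (star y))) (at level 70).

Hypothesis otimesC : forall x y, x ⊗ y = y ⊗ x.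
Hypothesis circC : forall x y, circ x y = circ y x.
Hypothesis starK : forall x, star (star x) = x.
Hypothesis circ_otimes_exchange : forall x y z, circ (x ⊗ y) z = circ (x ⊗ z) y.

Hypothesis perp_star : forall x, x ⊥ star x.
Hypothesis prec_antisym : forall x y, x ≾ y -> y ≾ x -> x = y.
Hypothesis perp_circ_Tt : forall x y, x ⊥ y <-> perp (El (circ x y)) Tt.
Hypothesis Tt_star_Ff : forall x, perp (El x) Tt <-> perp (El (star x)) Ff.
Hypothesis otimes_Ff :
  forall x y, perp (El x) Ff -> perp (El y) Ff -> perp (El (x ⊗ y)) Ff.
Hypothesis perp_imp_circ : forall x y, star (circ x (star y)) ⊥ star (circ x y).
Hypothesis perp_Ff_Tt : forall x y, x ⊥ y -> perp (El x) Ff -> perp (El y) Tt.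
Hypothesis oplus_Ff :
  forall x y, perp (El x) Ff -> perp (El (oplus otimes star x y)) Ff.
Hypothesis prec_trans : forall x y z, x ≾ y -> y ≾ z -> x ≾ z.

Hypothesis nontrivial : exists x y : A, x <> y.

Lemma perp_sym x y : x ⊥ y -> y ⊥ x.
Proof. intro H. apply perp_circ_Tt. rewrite circC. apply perp_circ_Tt, H. Qed.

Lemma perp_exchange x y z : x ⊗ y ⊥ z -> x ⊗ z ⊥ y.
Proof.
  intro H. apply perp_circ_Tt. rewrite <- circ_otimes_exchange.
  apply perp_circ_Tt, H.
Qed.

Lemma prec_star x y : x ≾ y -> star y ≾ star x.
Proof. intro H. rewrite starK. apply perp_sym, H. Qed.

Lemma perp_prec u v w : u ⊥ v -> w ≾ v -> u ⊥ w.
Proof.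
  intros Huv Hwv. rewrite <- (starK w).
  apply (prec_trans (y := star v)).
  - rewrite starK. exact Huv.
  - exact (prec_star Hwv).
Qed.

Lemma otimes_mono x y y' : y ≾ y' -> x ⊗ y ≾ x ⊗ y'.
Proof.
  intro H. apply perp_exchange.
  exact (perp_prec (perp_exchange (perp_star (x ⊗ y'))) H).
Qed.

Lemma otimes_Tt x y : perp (El x) Tt -> perp (El (x ⊗ y)) Tt.
Proof.
  intro H. apply Tt_star_Ff.
  pose proof (oplus_Ff (star y) (proj1 (Tt_star_Ff x) H)) as Hxy.
  unfold oplus in Hxy. rewrite !starK in Hxy. exact Hxy.
Qed.

Lemma not_Tt_and_Ff z : perp (El z) Tt -> ~ perp (El z) Ff.
Proof.
  intros HzT HzF. destruct nontrivial as [x [y Hxy]]. apply Hxy.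
  assert (all_Tt : forall w, perp (El w) Tt).
  { intro w. apply (perp_Ff_Tt (x := z ⊗ star (z ⊗ w))).
    - apply perp_exchange, perp_star.
    - apply otimes_Ff; [exact HzF | apply Tt_star_Ff, otimes_Tt, HzT]. }
  apply prec_antisym; apply perp_circ_Tt, all_Tt.
Qed.

Lemma perp_irrefl q : ~ q ⊥ q.
Proof.
  intro Hq. apply (not_Tt_and_Ff (z := circ q q)).
  - apply perp_circ_Tt, Hq.
  - rewrite <- (starK (circ q q)). apply Tt_star_Ff.
    apply (perp_Ff_Tt (perp_imp_circ q q)).
    apply Tt_star_Ff, perp_circ_Tt, perp_star.
Qed.

Lemma prec_star_lower_bound a b p : a ≾ b -> p ≾ b -> ~ p ≾ star a.
Proof.
  intros Hab Hpb Hpa.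
  pose (m := star a ⊗ star p).
  pose (q := star b ⊗ star m).
  assert (Hqp : q ⊥ p).
  { apply perp_exchange. apply (prec_trans (y := star a ⊗ star b)).
    - rewrite (otimesC (star a)). apply otimes_mono, Hpa.
    - apply otimes_mono, prec_star, Hpb. }
  apply (perp_irrefl (q := q)). apply perp_exchange.
  apply (prec_trans (y := star p ⊗ star b)).
  - rewrite (otimesC (star p)). apply otimes_mono. rewrite starK. exact Hqp.
  - unfold m. rewrite (otimesC (star a)). apply otimes_mono, prec_star, Hab.
Qed.

Lemma exists_strict_prec : exists a b, a ≾ b /\ a <> b.
Proof.
  destruct nontrivial as [x _].
  pose (a := circ x (star x)).
  assert (HaT : perp (El a) Tt) by apply perp_circ_Tt, perp_star.
  exists a, (star (a ⊗ star (a ⊗ a))). split.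
  - rewrite starK. apply perp_sym, perp_exchange, perp_star.
  - intro Hab. apply (not_Tt_and_Ff HaT). rewrite Hab.
    apply Tt_star_Ff, otimes_Tt, HaT.
Qed.

Definition down (a : A) : A -> Prop := fun y => prec star perp y a.

Lemma inDM_down a : inDM star perp (down a).
Proof.
  intro y. split.
  - intro Hy. apply Hy. intros x Hx. exact Hx.
  - intros Hy x Hx. exact (Hx y Hy).
Qed.

Lemma down_mono a b : a ≾ b -> subset (down a) (down b).
Proof. intros Hab y Hy. exact (prec_trans Hy Hab). Qed.

Lemma down_inj a b : seteq (down a) (down b) -> a = b.
Proof.
  intro H. apply prec_antisym.
  - apply (H a), perp_star.
  - apply (H b), perp_star.
Qed.

Lemma DMstar_down_meet a b :
  a ≾ b -> seteq (DMmeet (DMstar star perp (down a)) (down b)) (@DMbot A).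
Proof.
  intros Hab y. split; [intros [Hstar Hy] | intros []].
  apply (prec_star_lower_bound Hab Hy), Hstar.
  exists a. split; [apply perp_star | reflexivity].
Qed.

Lemma not_DM_orthomodular : ~ DM_orthomodular star perp.
Proof.
  intro orthomodular.
  destruct exists_strict_prec as [a [b [Hab Hneq]]].
  apply Hneq, down_inj, orthomodular;
    auto using inDM_down, down_mono, DMstar_down_meet.
Qed.

End NonOrthomodularity.

Theorem corollary6p19 (A : Type) (otimes circ : A -> A -> A) (star : A -> A)
    (perp : ext A -> ext A -> Prop) :
  Nw1_model otimes circ star perp ->
  (exists x y : A, x <> y) ->
  ~ DM_orthomodular star perp.
Proof.
  intros [[[otimesC [circC [starK exchange]]]
           [Ha [Hb [Hc [Hd [He [Hf [Hg _]]]]]]]] [Hoplus Htrans]] nontrivial.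
  exact (not_DM_orthomodular otimes circ otimesC circC starK exchange Ha Hb Hc Hd
           (fun x y Hx Hy => proj1 (He x y) (conj Hx Hy)) Hf Hg Hoplus Htrans
           nontrivial).
Qed.
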